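(* Let $\Gamma$ be a graph on $v$ vertices with adjacency matrix $A$ and Seidel matrix $S = J - I - 2A$, and suppose the switching class of $\Gamma$ is a regular two-graph, i.e. $S$ has exactly two distinct eigenvalues, written as $-1-2\sigma$ and $-1-2\tau$, with respective multiplicities $m_\sigma$ and $m_\tau$. Suppose $\Gamma$ has $e$ edges. Then the adjacency spectrum of $\Gamma$ (as a multiset) is $\{\rho_1^{(1)}, \rho_2^{(1)}, \sigma^{(m_\sigma - 1)}, \tau^{(m_\tau - 1)}\}$ for some real numbers $\rho_1,\rho_2$ (not necessarily distinct from each other or from $\sigma$ or $\tau$), and the following equations hold: $$m_\sigma + m_\tau = v,\quad m_\sigma\sigma + m_\tau\tau = -v/2,\quad m_\sigma\sigma^2 + m_\tau\tau^2 = v^2/4,$$ $$\rho_1+\rho_2 = \sigma+\tau+v/2 = -2\sigma\tau,\qquad \rho_1^2+\rho_2^2 = \sigma^2+\tau^2+2e - v^2/4.$$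
   Context: Graphs are finite, simple and undirected; $J$ is the all-ones matrix and $I$ the identity matrix of order $v$; the exponent $(m)$ denotes multiplicity. For a graph $\Gamma$ with vertex set $V$ and a partition $\Pi=\{U,W\}$ of $V$ (one part possibly empty), Seidel switching gives the graph $\Gamma^\Pi$ on $V$ in which two distinct vertices are adjacent iff either they are adjacent in $\Gamma$ and lie in the same part, or they are non-adjacent in $\Gamma$ and lie in different parts. The switching class (two-graph) $[\Gamma]$ is the set of all $\Gamma^\Pi$. The two-graph $[\Gamma]$ is called regular if the Seidel matrix $S(\Gamma)=J-I-2A$ has exactly two distinct eigenvalues (this is independent of the chosen graph in the class). *)

From HB Require Import structures.
From mathcomp Require Import all_boot all_order all_algebra.
Set Implicit Arguments. Unset Strict Implicit. Unset Printing Implicit Defensive.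
Import Order.TTheory GRing.Theory Num.Theory.
Local Open Scope ring_scope.

Definition simple_graph (v : nat) (adj : rel 'I_v) : Prop :=
  symmetric adj /\ irreflexive adj.

Definition adj_mx (R : nzRingType) (v : nat) (adj : rel 'I_v) : 'M[R]_v :=
  \matrix_(i, j) (adj i j)%:R.

Definition seidel_mx (R : nzRingType) (v : nat) (adj : rel 'I_v) : 'M[R]_v :=
  const_mx 1 - 1%:M - 2%:R *: adj_mx R adj.

Definition n_edges (v : nat) (adj : rel 'I_v) : nat :=
  #|[set p : 'I_v * 'I_v | (p.1 < p.2)%N && adj p.1 p.2]|.

From HB Require Import structures.
From mathcomp Require Import all_boot all_order all_algebra.
From mathcomp Require Import ring lra zify.
Set Implicit Arguments. Unset Strict Implicit. Unset Printing Implicit Defensive.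
Import Order.TTheory GRing.Theory Num.Theory.
Local Open Scope ring_scope.

(* The Seidel matrix S is real symmetric with eigenvalues t1 = -1 - 2 sigma and
   t2 = -1 - 2 tau, hence (S - t1)(S - t2) = 0, a symmetric nilpotent matrix
   being zero.  So t + S has the explicit inverse ((t + t1 + t2) - S) divided by
   (t + t1)(t + t2), and since 2 (x - A) = t + S - J for t = 2x + 1, the matrix
   determinant lemma gives det (x - A) = (x - sigma)^(m_sigma - 1)
   (x - tau)^(m_tau - 1) q(x), where q is a monic quadratic whose coefficients
   only involve v, sigma, tau and the entry sum v (v - 1) - 4e of S.  The roots
   of q are real because (S - t1)/(t2 - t1) and (S - t2)/(t1 - t2) are
   orthogonal projections, so that the entry sum of S lies between v t1 and
   v t2.  The other identities follow from tr S = 0 and (S^2)_ii = v - 1. *)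

Lemma trmxX (R : comNzRingType) n (B : 'M[R]_n.+1) m : (B ^+ m)^T = B^T ^+ m.
Proof.
elim: m => [|m IH]; first by rewrite !expr0 tr_scalar_mx.
by rewrite exprS -mulmxE trmx_mul IH mulmxE -exprSr.
Qed.

Lemma tr_horner_mx (R : comNzRingType) n (S : 'M[R]_n.+1) p :
  S^T = S -> (horner_mx S p)^T = horner_mx S p.
Proof.
move=> sS; elim/poly_ind: p => [|p c IH]; first by rewrite rmorph0 trmx0.
rewrite rmorphD rmorphM /= horner_mx_X horner_mx_C linearD /= tr_scalar_mx.
rewrite -mulmxE trmx_mul IH sS; congr (_ + _).
by have := comm_mx_horner p (comm_mx_refl S).
Qed.

Lemma sym_mx_sqr_eq0 (R : realDomainType) n (B : 'M[R]_n) :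
  B^T = B -> B *m B = 0 -> B = 0.
Proof.
move=> sB BB; apply/matrixP => i j; rewrite mxE.
have := congr1 (fun M : 'M[R]_n => M i i) BB; rewrite !mxE => /eqP.
rewrite psumr_eq0 => [/allP H|k _].
  by have := H j (mem_index_enum _); rewrite -{2}sB mxE /= mulf_eq0 orbb => /eqP.
by rewrite -{2}sB mxE -expr2 sqr_ge0.
Qed.

Lemma sym_mx_nilpotent_eq0 (R : realDomainType) n (B : 'M[R]_n.+1) m :
  B^T = B -> B ^+ m.+1 = 0 -> B = 0.
Proof.
move=> sB; elim: m => [|m IH] Bm; first by rewrite expr1 in Bm.
(* [B^(m+1)] is symmetric and its square [B^(m+2) B^m] vanishes. *)
apply: IH; apply: sym_mx_sqr_eq0; first by rewrite trmxX sB.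
by rewrite mulmxE -exprD addSnnS addnC exprD Bm mul0r.
Qed.

Lemma sym_mx_two_eigen_quadratic (R : realDomainType) n (S : 'M[R]_n.+1) a b m1 m2 :
  S^T = S -> char_poly S = ('X - a%:P) ^+ m1 * ('X - b%:P) ^+ m2 ->
  (S - a%:M) *m (S - b%:M) = 0.
Proof.
move=> sS charS; pose q := ('X - a%:P) * ('X - b%:P).
have qS : horner_mx S q = (S - a%:M) *m (S - b%:M).
  by rewrite rmorphM /= !rmorphB /= horner_mx_X !horner_mx_C mulmxE.
rewrite -qS; apply: (@sym_mx_nilpotent_eq0 _ _ _ (m1 + m2)).
  exact: tr_horner_mx.
rewrite -rmorphXn; have -> : q ^+ (m1 + m2).+1 =
    char_poly S * (('X - a%:P) ^+ m2.+1 * ('X - b%:P) ^+ m1.+1).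
  by rewrite charS /q exprMn !exprS !exprD; ring.
by rewrite rmorphM /= Cayley_Hamilton mul0r.
Qed.

Lemma quadratic_mx_diag (R : comNzRingType) n (S : 'M[R]_n) a b i :
  ((S - a%:M) *m (S - b%:M)) i i = (S *m S) i i - (a + b) * S i i + a * b.
Proof.
by rewrite mulmxBr !mulmxBl mul_scalar_mx mul_mx_scalar -scalar_mxM !mxE eqxx mulr1n; ring.
Qed.

Lemma eq_poly_horner_gt (R : realDomainType) (p q : {poly R}) (M : R) :
  (forall x, M < x -> p.[x] = q.[x]) -> p = q.
Proof.
move=> pq; apply/eqP; rewrite -subr_eq0; apply/eqP.
apply: (@roots_geq_poly_eq0 _ _ [seq M + i.+1%:R | i <- iota 0 (size (p - q))]).
- apply/allP => y /mapP [i _ ->]; rewrite /root hornerD hornerN pq ?subrr //.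
  by rewrite ltrDl ltr0n.
- rewrite map_inj_uniq ?iota_uniq // => i j /addrI /eqP.
  by rewrite eqr_nat eqSS => /eqP.
- by rewrite size_map size_iota.
Qed.

Lemma horner_char_poly (R : comNzRingType) n (S : 'M[R]_n) x :
  (char_poly S).[x] = \det (x%:M - S).
Proof.
rewrite /char_poly -horner_evalE -det_map_mx; congr (\det _).
apply/matrixP => i j; rewrite !mxE /horner_evalE.
by rewrite -[LHS]/((_ : {poly R}).[x]) hornerD hornerN hornerMn hornerX hornerC.
Qed.

Lemma prod_XsubC_nseq2 (R : comNzRingType) (a b : R) m1 m2 :
  ('X - a%:P) ^+ m1 * ('X - b%:P) ^+ m2 =
  \prod_(x <- nseq m1 a ++ nseq m2 b) ('X - x%:P).
Proof. by rewrite big_cat !big_nseq !iter_mulr_1. Qed.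

Section TwoEigenvalues.

Variables (R : idomainType) (n : nat) (S : 'M[R]_n) (a b : R) (m1 m2 : nat).
Hypothesis charS : char_poly S = ('X - a%:P) ^+ m1 * ('X - b%:P) ^+ m2.

Lemma two_eigen_mult_sum : (m1 + m2)%N = n.
Proof.
have := size_char_poly S.
by rewrite charS prod_XsubC_nseq2 size_prod_XsubC size_cat !size_nseq => -[].
Qed.

Lemma two_eigen_trace : \tr S = m1%:R * a + m2%:R * b.
Proof.
have := two_eigen_mult_sum; case: n S charS => [|n'] S' charS' mE.
  move: mE => /eqP; rewrite addn_eq0 => /andP[/eqP-> /eqP->].
  by rewrite /mxtrace big_ord0 !mul0r addr0.
apply/eqP; rewrite -eqr_opp -char_poly_trace // charS' prod_XsubC_nseq2 -mE.
have -> : (m1 + m2 = size (nseq m1 a ++ nseq m2 b))%N by rewrite size_cat !size_nseq.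
rewrite coefPn_prod_XsubC; last by rewrite size_cat !size_nseq mE.
by rewrite big_cat !big_nseq !iter_addr_0 !mulr_natl.
Qed.

Lemma det_add_scalar_two_eigen t : \det (t%:M + S) = (t + a) ^+ m1 * (t + b) ^+ m2.
Proof.
have := horner_char_poly S (- t); rewrite charS hornerM !horner_exp !hornerXsubC.
have -> : (- t)%:M - S = - 1 *: (t%:M + S).
  by rewrite scaleN1r opprD raddfN.
rewrite detZ.
have -> : (-1) ^+ n = (-1) ^+ m1 * (-1) ^+ m2 :> R.
  by rewrite -exprD two_eigen_mult_sum.
rewrite -[- t - a]opprD -[- t - b]opprD (exprNn (t + a)) (exprNn (t + b)) => E.
apply: (@mulfI _ ((-1) ^+ m1 * (-1) ^+ m2)); first by rewrite mulf_neq0 ?signr_eq0.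
by rewrite -E mulrACA.
Qed.

End TwoEigenvalues.

Definition mx_sum (R : nmodType) m n (M : 'M[R]_(m, n)) : R := \sum_i \sum_j M i j.

Section EntrySum.

Variable R : pzRingType.

Lemma mx_sumD m n (A B : 'M[R]_(m, n)) : mx_sum (A + B) = mx_sum A + mx_sum B.
Proof.
rewrite /mx_sum -big_split; apply: eq_bigr => i _.
by rewrite -big_split; apply: eq_bigr => j _; rewrite mxE.
Qed.

Lemma mx_sumN m n (A : 'M[R]_(m, n)) : mx_sum (- A) = - mx_sum A.
Proof.
rewrite /mx_sum -sumrN; apply: eq_bigr => i _.
by rewrite -sumrN; apply: eq_bigr => j _; rewrite mxE.
Qed.

Lemma mx_sumB m n (A B : 'M[R]_(m, n)) : mx_sum (A - B) = mx_sum A - mx_sum B.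
Proof. by rewrite mx_sumD mx_sumN. Qed.

Lemma mx_sumZ m n c (A : 'M[R]_(m, n)) : mx_sum (c *: A) = c * mx_sum A.
Proof.
rewrite /mx_sum mulr_sumr; apply: eq_bigr => i _.
by rewrite mulr_sumr; apply: eq_bigr => j _; rewrite mxE.
Qed.

Lemma mx_sum_scalar n c : mx_sum (c%:M : 'M[R]_n) = c *+ n.
Proof.
rewrite /mx_sum -[n in RHS]card_ord -sumr_const; apply: eq_bigr => i _.
by rewrite (bigD1 i) //= big1 => [|j /negbTE]; rewrite !mxE ?eqxx ?addr0 // eq_sym => ->.
Qed.

Lemma mx_sum_const m n c : mx_sum (const_mx c : 'M[R]_(m, n)) = c *+ (m * n).
Proof.
rewrite /mx_sum (eq_bigr (fun=> c *+ n)) => [|i _].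
  by rewrite sumr_const card_ord -mulrnA mulnC.
by rewrite -[n in RHS]card_ord -sumr_const; apply: eq_bigr => j _; rewrite mxE.
Qed.

End EntrySum.

Lemma mx_sumE (R : comNzRingType) m n (M : 'M[R]_(m, n)) :
  mx_sum M = ((const_mx 1 : 'rV_m) *m M *m (const_mx 1 : 'cV_n)) 0 0.
Proof.
rewrite -mulmxA mxE; apply: eq_bigr => i _; rewrite !mxE mul1r.
by apply: eq_bigr => j _; rewrite !mxE mulr1.
Qed.

Lemma mx_sum_gram_ge0 (R : realDomainType) m n (B : 'M[R]_(m, n)) :
  0 <= mx_sum (B^T *m B).
Proof.
rewrite mx_sumE.
have -> : (const_mx 1 : 'rV[R]_n) = (const_mx 1 : 'cV_n)^T by rewrite trmx_const.
rewrite mulmxA -mulmxA -trmx_mul mxE.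
by apply: sumr_ge0 => i _; rewrite !mxE -expr2 sqr_ge0.
Qed.

Lemma sym_mx_quadratic_sum_ge0 (R : realDomainType) n (S : 'M[R]_n) a b :
  S^T = S -> (S - a%:M) *m (S - b%:M) = 0 -> 0 <= (b - a) * (mx_sum S - a * n%:R).
Proof.
move=> sS quadS; set B := S - a%:M.
have sB : B^T = B by rewrite linearB /= tr_scalar_mx sS.
(* [(S - a)/(b - a)] is an orthogonal projection *)
have BB : B^T *m B = (b - a) *: B.
  rewrite sB {2}/B (_ : S - a%:M = S - b%:M + (b - a)%:M); last first.
    by rewrite raddfB /= addrA subrK.
  by rewrite mulmxDr quadS add0r mul_mx_scalar.
by have := mx_sum_gram_ge0 B; rewrite BB mx_sumZ mx_sumB mx_sum_scalar mulr_natr.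
Qed.

Lemma det1B_rank1 (R : comNzRingType) n (c : 'cV[R]_n) (r : 'rV[R]_n) :
  \det (1%:M - c *m r) = 1 - (r *m c) 0 0.
Proof.
have E1 : block_mx 1%:M c r 1%:M =
    block_mx 1%:M 0 r 1%:M *m block_mx 1%:M c 0 (1%:M - r *m c).
  by rewrite mulmx_block ?mul1mx ?mul0mx ?mulmx0 ?mulmx1 ?addr0 ?add0r addrC subrK.
have E2 : block_mx 1%:M c r 1%:M =
    block_mx (1%:M - c *m r) c 0 1%:M *m block_mx 1%:M 0 r 1%:M.
  by rewrite mulmx_block ?mul1mx ?mul0mx ?mulmx0 ?mulmx1 ?addr0 ?add0r subrK.
have := congr1 determinant E1; rewrite {1}E2 !det_mulmx !det_lblock !det_ublock.
by rewrite !det1 !mul1r !mulr1 det_mx11 !mxE => ->.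
Qed.

Lemma det_sub_const1 (R : fieldType) n (M M' : 'M[R]_n) d :
  d != 0 -> M *m M' = d%:M ->
  \det (M - const_mx 1) * d = \det M * (d - mx_sum M').
Proof.
move=> d0 MM'.
have MM'1 : M *m (d^-1 *: M') = 1%:M.
  by rewrite -scalemxAr MM' scale_scalar_mx mulVf.
have J : const_mx 1 = (const_mx 1 : 'cV[R]_n) *m (const_mx 1 : 'rV_n).
  by apply/matrixP => i j; rewrite !mxE big_ord1 !mxE mulr1.
have -> : M - const_mx 1 =
    M *m (1%:M - (d^-1 *: M' *m const_mx 1) *m (const_mx 1 : 'rV_n)).
  by rewrite mulmxBr mulmx1 !mulmxA MM'1 mul1mx -J.
rewrite det_mulmx det1B_rank1 mulmxA -scalemxAr -scalemxAl mxE -mx_sumE.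
by rewrite -mulrA mulrBl mul1r mulrAC mulVf // mul1r.
Qed.

Lemma det_add_scalar_sub_const (R : fieldType) n (S : 'M[R]_n) a b m1 m2 t :
  char_poly S = ('X - a%:P) ^+ m1 * ('X - b%:P) ^+ m2 ->
  (S - a%:M) *m (S - b%:M) = 0 -> (t + a) * (t + b) != 0 ->
  \det (t%:M + S - const_mx 1) * ((t + a) * (t + b)) =
  (t + a) ^+ m1 * (t + b) ^+ m2 * ((t + a) * (t + b) - mx_sum ((t + a + b)%:M - S)).
Proof.
move=> charS quadS d0; rewrite -(det_add_scalar_two_eigen charS).
apply: det_sub_const1 => //.
(* [(t + S)((t + a + b) - S) = (t + a)(t + b) - (S - a)(S - b)] *)
rewrite -[RHS]subr0 -quadS mulmxDl !mulmxBr !mulmxBl !mul_scalar_mx !mul_mx_scalar.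
set SS := S *m S; apply/matrixP => i j; rewrite !mxE.
by case: (i == j); rewrite ?mulr1n ?mulr0n; ring.
Qed.

Section SeidelMatrix.

Variables (R : comNzRingType) (n : nat) (adj : rel 'I_n).
Hypothesis adjG : simple_graph adj.

Local Notation A := (adj_mx R adj).
Local Notation S := (seidel_mx R adj).

Lemma seidel_mxE i j : S i j = 1 - (i == j)%:R - 2 * (adj i j)%:R.
Proof. by rewrite !mxE. Qed.

Lemma seidel_mx_diag i : S i i = 0.
Proof. by rewrite seidel_mxE eqxx (proj2 adjG) subrr mulr0 subr0. Qed.

Lemma tr_seidel_mx : S^T = S.
Proof. by apply/matrixP => i j; rewrite mxE !seidel_mxE eq_sym (proj1 adjG). Qed.

Lemma seidel_mx_trace : \tr S = 0.
Proof. by rewrite /mxtrace big1 // => i _; rewrite seidel_mx_diag. Qed.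

Lemma seidel_mx_sqr_diag i : (S *m S) i i = n%:R - 1.
Proof.
have delta_i : \sum_k ((i == k)%:R : R) = 1.
  by rewrite (bigD1 i) //= eqxx big1 ?addr0 // => k /negbTE; rewrite eq_sym => ->.
transitivity (\sum_k (1 - (i == k)%:R : R)); last first.
  by rewrite sumrB sumr_const card_ord delta_i.
rewrite mxE; apply: eq_bigr => k _.
have [<-|ik] := eqVneq i k; first by rewrite seidel_mx_diag mul0r subrr.
rewrite !seidel_mxE (negbTE ik) eq_sym (negbTE ik) (proj1 adjG k i) subr0.
by case: (adj i k); rewrite /= ?mulr0 ?mulr1 ?subr0; ring.
Qed.

Lemma mx_sum_adj_mx : mx_sum A = 2 * (n_edges adj)%:R.
Proof.
have sw : injective (fun p : 'I_n * 'I_n => (p.2, p.1)) by move=> [? ?] [? ?] [-> ->].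
pose E (p : 'I_n * 'I_n) : bool := (p.1 < p.2)%N && adj p.1 p.2.
(* every edge is counted once as [(i, j)] with [i < j] and once as [(j, i)] *)
have -> : mx_sum A = \sum_p ((E p)%:R + (E (p.2, p.1))%:R).
  rewrite /mx_sum pair_bigA; apply: eq_bigr => -[i j] _ /=; rewrite mxE /E /=.
  rewrite (proj1 adjG j i); case: (ltngtP i j) => [_|_|/val_inj ->] /=.
  - by rewrite addr0.
  - by rewrite add0r.
  - by rewrite (proj2 adjG) addr0.
have -> : (n_edges adj)%:R = \sum_p ((E p)%:R : R).
  rewrite /n_edges cardsE -sum1_card natr_sum [LHS]big_mkcond /=.
  by apply: eq_bigr => p _; rewrite -topredE /= /E; case: (_ && _).
by rewrite big_split /= [X in _ + X](reindex_inj sw) /= -mulr2n mulr_natl.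
Qed.

Lemma mx_sum_seidel_mx : mx_sum S = n%:R ^+ 2 - n%:R - 4 * (n_edges adj)%:R.
Proof.
rewrite !mx_sumB mx_sumZ mx_sum_const mx_sum_scalar mx_sum_adj_mx.
by rewrite natrM; ring.
Qed.

End SeidelMatrix.

Lemma scalar_sub_adj_mx (R : numFieldType) n (adj : rel 'I_n) x :
  x%:M - adj_mx R adj = 2^-1 *: ((2 * x + 1)%:M + seidel_mx R adj - const_mx 1).
Proof.
have two_neq0 : (2 : R) != 0 by rewrite pnatr_eq0.
apply/matrixP => i j; rewrite !mxE.
by case: (i == j); case: (adj i j); rewrite ?mulr1n ?mulr0n; field.
Qed.

Lemma real_quadratic_roots (R : rcfType) (p c : R) :
  0 <= p ^+ 2 - 4 * c -> exists r1 r2 : R, r1 + r2 = p /\ r1 * r2 = c.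
Proof.
move=> D_ge0; set D := p ^+ 2 - 4 * c in D_ge0.
exists ((p + Num.sqrt D) / 2), ((p - Num.sqrt D) / 2); split; first by field.
transitivity ((p ^+ 2 - Num.sqrt D ^+ 2) / 4); first by field.
by rewrite sqr_sqrtr // /D; field.
Qed.

Section RegularTwoGraph.

Variables (R : realFieldType) (n : nat) (adj : rel 'I_n.+1) (sigma tau : R) (m1 m2 : nat).
Hypothesis adjG : simple_graph adj.
Hypothesis charS : char_poly (seidel_mx R adj) =
  ('X - (-1 - 2 * sigma)%:P) ^+ m1 * ('X - (-1 - 2 * tau)%:P) ^+ m2.

Local Notation S := (seidel_mx R adj).
Local Notation v := (n.+1%:R : R).
Local Notation e := ((n_edges adj)%:R : R).

Lemma two_graph_mult_sum : (m1 + m2)%N = n.+1.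
Proof. exact: two_eigen_mult_sum charS. Qed.

Lemma two_graph_quadratic :
  (S - (-1 - 2 * sigma)%:M) *m (S - (-1 - 2 * tau)%:M) = 0.
Proof. exact: sym_mx_two_eigen_quadratic (tr_seidel_mx R adjG) charS. Qed.

Lemma two_graph_eigen_rel : sigma + tau + v / 2 = - 2 * sigma * tau.
Proof.
have := congr1 (fun M : 'M[R]_n.+1 => M ord0 ord0) two_graph_quadratic.
by rewrite /= quadratic_mx_diag seidel_mx_sqr_diag // seidel_mx_diag // mxE; lra.
Qed.

Lemma two_graph_eigen_sum : m1%:R * sigma + m2%:R * tau = - (v / 2).
Proof.
have vE : v = m1%:R + m2%:R by rewrite -natrD two_graph_mult_sum.
by have := two_eigen_trace charS; rewrite seidel_mx_trace // vE; lra.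
Qed.

Lemma two_graph_eigen_sqr_sum : m1%:R * sigma ^+ 2 + m2%:R * tau ^+ 2 = v ^+ 2 / 4.
Proof.
have vE : v = m1%:R + m2%:R by rewrite -natrD two_graph_mult_sum.
transitivity ((sigma + tau) * (m1%:R * sigma + m2%:R * tau) - sigma * tau * v).
  by rewrite vE; ring.
have -> : sigma * tau = - (sigma + tau + v / 2) / 2 by rewrite two_graph_eigen_rel; field.
by rewrite two_graph_eigen_sum; field.
Qed.

Lemma two_graph_discr_ge0 : sigma != tau ->
  0 <= (sigma + tau + v / 2) ^+ 2
       - 4 * (sigma * tau + v * (sigma + tau) / 2 + v ^+ 2 / 4 - e).
Proof.
move=> sigma_neq_tau; have symS := tr_seidel_mx R adjG.
have charS' : char_poly S =
    ('X - (-1 - 2 * tau)%:P) ^+ m2 * ('X - (-1 - 2 * sigma)%:P) ^+ m1.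
  by rewrite charS mulrC.
have := sym_mx_quadratic_sum_ge0 symS two_graph_quadratic.
have := sym_mx_quadratic_sum_ge0 symS (sym_mx_two_eigen_quadratic symS charS').
rewrite mx_sum_seidel_mx //.
(* the entry sum of [S] lies between [v] times each eigenvalue *)
have [lt|gt|eq_st] := ltrgtP sigma tau; last by move/eqP: sigma_neq_tau.
- have neg : (-1 - 2 * tau) - (-1 - 2 * sigma) < 0 by lra.
  rewrite (nmulr_rge0 _ neg) => _ g; have := sqr_ge0 (sigma - tau + v / 2); lra.
- have neg : (-1 - 2 * sigma) - (-1 - 2 * tau) < 0 by lra.
  rewrite (nmulr_rge0 _ neg) => g _; have := sqr_ge0 (tau - sigma + v / 2); lra.
Qed.

Lemma two_graph_char_poly_adj rho1 rho2 : (0 < m1)%N -> (0 < m2)%N ->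
  rho1 + rho2 = sigma + tau + v / 2 ->
  rho1 * rho2 = sigma * tau + v * (sigma + tau) / 2 + v ^+ 2 / 4 - e ->
  char_poly (adj_mx R adj) = ('X - rho1%:P) * ('X - rho2%:P) *
    ('X - sigma%:P) ^+ (m1 - 1) * ('X - tau%:P) ^+ (m2 - 1).
Proof.
move=> m1_gt0 m2_gt0 rho_sum rho_prod.
apply: (@eq_poly_horner_gt _ _ _ (`|sigma| + `|tau|)) => x x_gt.
have xs : 0 < x - sigma by have := ler_norm sigma; have := normr_ge0 tau; lra.
have xt : 0 < x - tau by have := ler_norm tau; have := normr_ge0 sigma; lra.
have ts : 2 * x + 1 + (-1 - 2 * sigma) = 2 * (x - sigma) by ring.
have tt : 2 * x + 1 + (-1 - 2 * tau) = 2 * (x - tau) by ring.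
have d0 : (2 * x + 1 + (-1 - 2 * sigma)) * (2 * x + 1 + (-1 - 2 * tau)) != 0.
  by rewrite ts tt !mulf_neq0 ?pnatr_eq0 ?gt_eqF.
have := det_add_scalar_sub_const charS two_graph_quadratic d0.
rewrite mx_sumB mx_sum_scalar mx_sum_seidel_mx // => E.
rewrite horner_char_poly scalar_sub_adj_mx detZ (canRL (mulfK d0) E) ts tt.
rewrite !hornerM !horner_exp !hornerXsubC.
have -> : (x - rho1) * (x - rho2) = x ^+ 2 - (rho1 + rho2) * x + rho1 * rho2 by ring.
rewrite rho_sum rho_prod.
have -> : (2^-1 : R) ^+ n.+1 = 2^-1 ^+ m1 * 2^-1 ^+ m2.
  by rewrite -exprD two_graph_mult_sum.
have [p m1E] : exists p, m1 = p.+1 by exists m1.-1; lia.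
have [q m2E] : exists q, m2 = q.+1 by exists m2.-1; lia.
rewrite m1E m2E !subn1 /= !exprMn !exprVn !exprS -mulr_natr.
by field; rewrite mul1r !expf_neq0 // !gt_eqF.
Qed.

End RegularTwoGraph.

Theorem lemma4 (R : rcfType) (v : nat) (adj : rel 'I_v)
    (sigma tau : R) (msigma mtau : nat) :
  simple_graph adj ->
  sigma != tau ->
  (0 < msigma)%N -> (0 < mtau)%N ->
  char_poly (seidel_mx R adj) =
    ('X - (-1 - 2 * sigma)%:P) ^+ msigma * ('X - (-1 - 2 * tau)%:P) ^+ mtau ->
  exists rho1 rho2 : R,
    char_poly (adj_mx R adj) =
      ('X - rho1%:P) * ('X - rho2%:P) *
      ('X - sigma%:P) ^+ (msigma - 1) * ('X - tau%:P) ^+ (mtau - 1)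
    /\ (msigma + mtau)%N = v
    /\ msigma%:R * sigma + mtau%:R * tau = - (v%:R / 2)
    /\ msigma%:R * sigma ^+ 2 + mtau%:R * tau ^+ 2 = v%:R ^+ 2 / 4
    /\ rho1 + rho2 = sigma + tau + v%:R / 2
    /\ sigma + tau + v%:R / 2 = - 2 * sigma * tau
    /\ rho1 ^+ 2 + rho2 ^+ 2 =
         sigma ^+ 2 + tau ^+ 2 + 2 * (n_edges adj)%:R - v%:R ^+ 2 / 4.
Proof.
move=> adjG sigma_neq_tau msigma_gt0 mtau_gt0 charS.
have := two_eigen_mult_sum charS.
case: v adj adjG charS => [|n] adj adjG charS mult_sum; first by lia.
have [rho1 [rho2 [rho_sum rho_prod]]] :=
  real_quadratic_roots (two_graph_discr_ge0 adjG charS sigma_neq_tau).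
exists rho1, rho2; split; first exact: two_graph_char_poly_adj.
split; first exact: mult_sum.
split; first exact: two_graph_eigen_sum adjG charS.
split; first exact: two_graph_eigen_sqr_sum adjG charS.
split; first exact: rho_sum.
split; first exact: two_graph_eigen_rel adjG charS.
have -> : rho1 ^+ 2 + rho2 ^+ 2 = (rho1 + rho2) ^+ 2 - 2 * (rho1 * rho2) by ring.
by rewrite rho_sum rho_prod; field.
Qed.
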